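(* Fix $k\in\mathbb{N}$ and positive constants $b_0,b_1,b_2,\lambda_0,\lambda_1$. There exists $C>0$ depending only on $b_0,b_1,\lambda_0,\lambda_1$ (and the fixed $k$) such that the following holds. Let $T\geq10$, $\ell<r$, $a^\pm\in\mathbb{R}^k$, $g:[\ell,r]\to\mathbb{R}$ Lipschitz with $g(\ell)=g(r)=0$, and $P\subset(\ell,\ell+T^{1/2})\cap(\ell,r)$ finite. Suppose that $r-\ell\leq b_0T$, $|P|\leq b_0T$, $|g(x)-g(y)|\leq b_1T|x-y|$ for all $x,y$, $a^\pm_j-a^\pm_{j+1}\geq\lambda_0T^{1/2}$ for $j\in\{1,\dots,k-1\}$, $a^-_k-g(\ell)\geq\lambda_1T$, $a^+_k-g(r)\geq\lambda_1T$, $a^-_1-g(\ell)\leq b_2T^2$, $a^+_1-g(r)\leq b_2T^2$. Then $\mathbb{E}_{\mathrm{free}}[W]\geq C^{-1}e^{-CT^{5/2}}$.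
   Context: $\mathbb{P}_{\mathrm{free}}$ (expectation $\mathbb{E}_{\mathrm{free}}$) is the law of $k$ independent Brownian bridges (diffusion parameter one) $\mathcal{L}=(\mathcal{L}_1,\dots,\mathcal{L}_k)$ on $[\ell,r]$ with $\mathcal{L}_j(\ell)=a^-_j$, $\mathcal{L}_j(r)=a^+_j$. $W(\mathcal{L})=1$ if $\mathcal{L}_j(p)>g(p)$ for all $p\in P$ and $j\in\{1,\dots,k\}$, and $W(\mathcal{L})=0$ otherwise. *)

From HB Require Import structures.
From mathcomp Require Import all_boot all_order all_algebra.
From mathcomp Require Import all_classical all_reals all_analysis.
Set Implicit Arguments. Unset Strict Implicit. Unset Printing Implicit Defensive.
Import Order.TTheory GRing.Theory Num.Theory.
Local Open Scope classical_set_scope.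
Local Open Scope ring_scope.

Definition heat_kernel {R : realType} (t x y : R) : R :=
  (Num.sqrt (2 * pi * t))^-1 * expR (- ((y - x) ^+ 2) / (2 * t)).

(* Unnormalised finite-dimensional integral of a Brownian bridge ending at
   (r, b): starting from (t0, x0), visiting the (increasing) times ts, the value
   at time t being constrained to lie in B t. *)
Fixpoint bb_int {R : realType} (r b : R) (ts : seq R) (B : R -> set R)
    (t0 x0 : R) : \bar R :=
  match ts with
  | [::] => (heat_kernel (r - t0) x0 b)%:E
  | t :: ts' =>
      (\int[@lebesgue_measure R]_(y in B t)
          ((heat_kernel (t - t0) x0 y)%:E * bb_int r b ts' B t y))%E
  end.

(* P(X(t) in B t for all t in ts) for a Brownian bridge X from (l,a) to (r,b),
   given by its finite-dimensional (Gaussian, Markov) density. *)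
Definition bb_fdd {R : realType} (l r a b : R) (ts : seq R) (B : R -> set R)
  : \bar R :=
  (bb_int r b ts B l a * ((heat_kernel (r - l) a b)^-1)%:E)%E.

(* L = (L_1,...,L_k) is a family of k independent Brownian bridges
   (diffusion parameter one) on [l,r] with L_j(l) = am j, L_j(r) = ap j,
   defined on the probability space (Omega, Pr): its finite-dimensional
   distributions (on rectangles, which determine them) are those of
   independent Brownian bridges. *)
Definition free_bridges {R : realType} (k : nat) (l r : R) (am ap : 'I_k -> R)
    {d : measure_display} {Omega : measurableType d}
    (Pr : probability Omega R) (L : 'I_k -> R -> Omega -> R) : Prop :=
  [/\ (forall j t, measurable_fun setT (L j t)),
      (forall j w, L j l w = am j /\ L j r w = ap j) &
      (forall (ts : seq R), sorted <%R ts ->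
         all (fun t => (l < t) && (t < r)) ts ->
         forall B : 'I_k -> R -> set R, (forall j t, measurable (B j t)) ->
         Pr [set w | forall j t, t \in ts -> B j t (L j t w)]
         = (\prod_(j < k) bb_fdd l r (am j) (ap j) ts (B j))%E)].

(* The event {W = 1}: all curves lie strictly above g at all points of P. *)
Definition W_event {R : realType} (k : nat) {Omega : Type}
    (L : 'I_k -> R -> Omega -> R) (g : R -> R) (P : seq R) : set Omega :=
  [set w | forall (j : 'I_k) (p : R), p \in P -> g p < L j p w].

From HB Require Import structures.
From mathcomp Require Import all_boot all_order all_algebra.
From mathcomp Require Import all_classical all_reals all_analysis.
From mathcomp Require Import ring lra zify.

Set Implicit Arguments.
Unset Strict Implicit.
Unset Printing Implicit Defensive.
Import Order.TTheory GRing.Theory Num.Theory.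
Local Open Scope classical_set_scope.
Local Open Scope ring_scope.

(** The curves are independent, so [E_free W] is the product over [j] of the
    probability that a single bridge stays above [g] on [P]; the ordering
    hypotheses only serve to put every endpoint above [g].  Reveal a bridge at
    the points of [P] from left to right: given its value above the barrier at
    the previous point, its value at the next one is Gaussian with variance
    [v = s u / (s + u)] and mean [m] interpolating towards [(r, a+)], where [s]
    and [u] are the distances to the previous point and to [r].  As [g] is
    [b1 T]-Lipschitz and vanishes at [r], the barrier lies at most
    [D = 2 b1 T s u / (s + u)] above [m], so the window of width [sqrt v]
    above [m + D] has mass at least [c exp (- D^2 / v) >= c exp (- 4 (b1 T)^2 s)].
    Over the at most [b0 T] points of [P], all within [T^(1/2)] of [l], this
    costs [c^(b0 T) exp (- 4 (b1 T)^2 T^(1/2)) = exp (- O (T^(5/2)))]. *)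

Section HeatKernel.
Variable R : realType.

Lemma heat_kernel_ge0 (t x y : R) : 0 <= heat_kernel t x y.
Proof.
by rewrite /heat_kernel mulr_ge0 ?invr_ge0 ?sqrtr_ge0 // ltW // expR_gt0.
Qed.

Lemma heat_kernel_gt0 (t x y : R) : 0 < t -> 0 < heat_kernel t x y.
Proof.
move=> t0; rewrite /heat_kernel mulr_gt0 ?expR_gt0 // invr_gt0 sqrtr_gt0.
by rewrite !mulr_gt0 // pi_gt0.
Qed.

(* The position at time [s] of a Brownian bridge from [(0, x)] to
   [(s + u, b)] is Gaussian. *)
Lemma heat_kernelM (s u x y b : R) : 0 < s -> 0 < u ->
  heat_kernel s x y * heat_kernel u y b =
  heat_kernel (s + u) x b *
  heat_kernel (s * u / (s + u)) ((u * x + s * b) / (s + u)) y.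
Proof.
move=> s0 u0; have su0 : 0 < s + u by rewrite addr_gt0.
have pi0 : 0 < pi :> R by exact: pi_gt0.
rewrite /heat_kernel mulrACA [in RHS]mulrACA -!invfM -!expRD.
congr (_ * _); last by congr expR; field; rewrite !gt_eqF.
congr (_^-1); rewrite -!sqrtrM ?mulr_ge0 ?ltW ?divr_gt0 ?mulr_gt0 //.
by congr Num.sqrt; field; rewrite gt_eqF.
Qed.

(* A Gaussian of variance [v] gives the window [(m + D, m + D + sqrt v]] above
   its mean [m] mass at least [gauss_window_const * exp (- D^2 / v)]. *)
Definition gauss_window_const : R := (Num.sqrt (2 * pi))^-1 * expR (-1).

Lemma gauss_window_const_gt0 : 0 < gauss_window_const.
Proof.
by rewrite mulr_gt0 ?expR_gt0 // invr_gt0 sqrtr_gt0 mulr_gt0 // pi_gt0.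
Qed.

Lemma gauss_window_const_le1 : gauss_window_const <= 1.
Proof.
have sqrt2pi : 1 < Num.sqrt (2 * pi) :> R.
  rewrite -[X in X < _]sqrtr1 ltr_sqrt; have := pi_ge2 R; lra.
rewrite -[1]mulr1 ler_pM ?invr_ge0 ?sqrtr_ge0 ?ltW ?expR_gt0 //.
by rewrite invf_lt1 // (lt_trans _ sqrt2pi).
Qed.

Lemma heat_kernel_window (v m D y : R) : 0 < v -> 0 <= D ->
  m + D < y <= m + D + Num.sqrt v ->
  (Num.sqrt (2 * pi * v))^-1 * expR (- (D ^+ 2 / v + 1)) <= heat_kernel v m y.
Proof.
move=> v0 D0 /andP[y_gt y_le].
rewrite /heat_kernel ler_wpM2l ?invr_ge0 ?sqrtr_ge0 // ler_expR mulNr lerN2.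
rewrite ler_pdivrMr ?mulr_gt0 //.
have -> : (D ^+ 2 / v + 1) * (2 * v) = 2 * D ^+ 2 + 2 * Num.sqrt v ^+ 2.
  by rewrite sqr_sqrtr ?ltW //; field; rewrite gt_eqF.
have := sqr_ge0 (D - Num.sqrt v); have := sqrtr_ge0 v; nra.
Qed.

End HeatKernel.

Section IntegralLowerBound.
Variable R : realType.
Import HBNNSimple.

(* No measurability of [f] is needed: the integral of a nonnegative function
   is a supremum over the simple functions below it. *)
Lemma ge0_integral_ge_nnsfun (D : set R) (f : R -> \bar R)
    (h : {nnsfun R >-> R}) :
  (forall x, D x -> (0 <= f x)%E) -> (forall x, D x -> ((h x)%:E <= f x)%E) ->
  (\int[lebesgue_measure]_(x in D) (h x)%:E
     <= \int[lebesgue_measure]_(x in D) f x)%E.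
Proof.
move=> f_ge0 hf; rewrite !ge0_integralE //; last by move=> x _; rewrite lee_fin.
apply: ereal_sup_le => z [s sh <-]; exists s => // x.
apply: le_trans (sh x) _; rewrite /patch; case: ifP => // /set_mem Dx.
exact: hf.
Qed.

Lemma ge0_integral_ge_itv (D : set R) (f : R -> \bar R) (c a b : R) :
  measurable D -> 0 <= c -> a <= b -> `]a, b] `<=` D ->
  (forall x, D x -> (0 <= f x)%E) -> (forall x, a < x <= b -> (c%:E <= f x)%E) ->
  ((c * (b - a))%:E <= \int[lebesgue_measure]_(x in D) f x)%E.
Proof.
move=> mD c_ge0 ab abD f_ge0 f_ge_c.
have mab : measurable (`]a, b] : set R) by [].
pose h : {nnsfun R >-> R} :=
  mul_nnsfun (cst_nnsfun R (NngNum c_ge0)) (indic_nnsfun R mab).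
apply: (le_trans _ (ge0_integral_ge_nnsfun (h := h) f_ge0 _)); last first.
  move=> x Dx /=; rewrite measurable_realfun.mindicE /indic /=.
  case: (boolP (x \in `]a, b]%classic)) => xab; rewrite ?mulr1 ?mulr0.
    by apply: f_ge_c; move: xab; rewrite inE /= in_itv.
  exact: f_ge0.
rewrite (_ : (fun x => _) = (fun x => (c * \1_(`]a, b]%classic : set R) x)%:E));
  last exact/funext.
rewrite integralZl_indic //=; last first.
  by move=> /(lt_le_trans) /(_ c_ge0); rewrite ltxx.
rewrite integral_indic // (setIidl abD).
have /= -> := lebesgue_measure_itv `]a, b]; rewrite lte_fin.
case: ltP => [_|ba]; first by rewrite -EFinD -EFinM.
have -> : b = a by apply/le_anti; rewrite ab ba.
by rewrite subrr mulr0 mule0.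
Qed.

End IntegralLowerBound.

Section BridgeStep.
Variable R : realType.

Lemma integral_heat_kernel_above (s u x b K h beta : R) (F : R -> \bar R) :
  0 < s -> 0 < u -> 0 <= K -> 0 <= beta ->
  h <= (u * x + s * b) / (s + u) + 2 * beta * s * u / (s + u) ->
  (forall y, h < y -> (0 <= F y)%E) ->
  (forall y, h < y -> ((K * heat_kernel u y b)%:E <= F y)%E) ->
  ((K * heat_kernel (s + u) x b * gauss_window_const R
      * expR (- (4 * beta ^+ 2 * s)))%:E
   <= \int[lebesgue_measure]_(y in `]h, +oo[) ((heat_kernel s x y)%:E * F y))%E.
Proof.
move=> s0 u0 K0 beta0 h_le F_ge0 F_ge.
have su0 : 0 < s + u by rewrite addr_gt0.
set m := (u * x + s * b) / (s + u); set v := s * u / (s + u).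
set D := 2 * beta * s * u / (s + u); set H := heat_kernel (s + u) x b.
have v0 : 0 < v by rewrite divr_gt0 ?mulr_gt0.
have D0 : 0 <= D by rewrite divr_ge0 ?mulr_ge0 // ltW.
pose c := K * H * ((Num.sqrt (2 * pi * v))^-1 * expR (- (D ^+ 2 / v + 1))).
have c0 : 0 <= c.
  by rewrite !mulr_ge0 ?heat_kernel_ge0 ?invr_ge0 ?sqrtr_ge0 // ltW ?expR_gt0.
have window_mass : c * Num.sqrt v
    = K * H * gauss_window_const R * expR (- (D ^+ 2 / v)).
  have sqrtv0 : Num.sqrt v != 0 by rewrite gt_eqF ?sqrtr_gt0.
  have sqrt2pi0 : Num.sqrt (2 * pi) != 0 :> R.
    by rewrite gt_eqF ?sqrtr_gt0 ?mulr_gt0 ?pi_gt0.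
  rewrite /c /gauss_window_const sqrtrM ?mulr_ge0 ?ltW ?pi_gt0 //.
  by rewrite opprD expRD; field; rewrite sqrtv0 sqrt2pi0.
have drift_cost : D ^+ 2 / v <= 4 * beta ^+ 2 * s.
  rewrite (_ : D ^+ 2 / v = 4 * beta ^+ 2 * s * (u / (s + u))); last first.
    by rewrite /D /v; field; rewrite !gt_eqF.
  rewrite -[leRHS]mulr1 ler_wpM2l ?mulr_ge0 ?sqr_ge0 ?(ltW s0) //.
  by rewrite ler_pdivrMr // mul1r lerDr ltW.
apply: (le_trans _ (ge0_integral_ge_itv (a := m + D) (b := m + D + Num.sqrt v)
  _ c0 _ _ _ _)) => //.
- rewrite addrAC subrr add0r window_mass lee_fin; apply: ler_wpM2l.
    by rewrite !mulr_ge0 // ?heat_kernel_ge0 // ltW // gauss_window_const_gt0.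
  by rewrite ler_expR lerN2.
- by rewrite lerDl sqrtr_ge0.
- move=> y /=; rewrite !in_itv /= andbT => /andP[+ _].
  exact: le_lt_trans.
- move=> y /=; rewrite in_itv /= andbT => hy.
  by rewrite mule_ge0 ?lee_fin ?heat_kernel_ge0 ?F_ge0.
move=> y y_win; have hy : h < y.
  by case/andP: y_win => + _; exact: le_lt_trans.
apply: le_trans (lee_wpmul2l _ (F_ge y hy)); last first.
  by rewrite lee_fin heat_kernel_ge0.
rewrite -EFinM lee_fin mulrCA heat_kernelM // -/m -/v -/H /c [leRHS]mulrA.
apply: ler_wpM2l; first by rewrite mulr_ge0 ?heat_kernel_ge0.
exact: heat_kernel_window.
Qed.

Lemma barrier_le_bridge_mean (s u x b beta z : R) : 0 < s -> 0 < u ->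
  z <= x + beta * s -> z <= b + beta * u ->
  z <= (u * x + s * b) / (s + u) + 2 * beta * s * u / (s + u).
Proof.
move=> s0 u0 zx zb; rewrite -mulrDl ler_pdivlMr ?addr_gt0 //.
have := ler_wpM2l (ltW s0) zb; have := ler_wpM2l (ltW u0) zx; nra.
Qed.

End BridgeStep.

Definition above {R : realType} (g : R -> R) : R -> set R :=
  fun t => `]g t, +oo[%classic.

Section BridgeAboveBarrier.
Variables (R : realType) (l r b beta : R) (g : R -> R).
Hypothesis g_lipschitz : forall x y, l <= x <= r -> l <= y <= r ->
  `|g x - g y| <= beta * `|x - y|.
Hypothesis g_r_le : g r <= b.
Hypothesis beta_ge0 : 0 <= beta.

Let g_le_dist x y : l <= x <= r -> l <= y <= r -> g y <= g x + beta * `|y - x|.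
Proof.
by move=> xlr ylr; rewrite -lerBlDl (le_trans (ler_norm _)) ?g_lipschitz.
Qed.

Lemma bb_int_above_ge (ts : seq R) (t0 x : R) :
  l <= t0 -> t0 < r -> path <%R t0 ts -> all (fun t => t < r) ts -> g t0 <= x ->
  ((gauss_window_const R ^+ size ts
      * expR (- (4 * beta ^+ 2 * (last t0 ts - t0))) * heat_kernel (r - t0) x b)%:E
   <= bb_int r b ts (above g) t0 x)%E.
Proof.
elim: ts t0 x => [|t ts IH] t0 x lt0 t0r /=.
  by move=> *; rewrite expr0 mul1r subrr mulr0 oppr0 expR0 mul1r.
move=> /andP[t0t t_path] /andP[tr ts_r] g_x.
have lt : l <= t by rewrite (le_trans lt0) // ltW.
set K := gauss_window_const R ^+ size ts
  * expR (- (4 * beta ^+ 2 * (last t ts - t))).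
have K0 : 0 <= K.
  by rewrite mulr_ge0 ?exprn_ge0 ?ltW ?gauss_window_const_gt0 ?expR_gt0.
have IHt y : g t < y ->
    ((K * heat_kernel (r - t) y b)%:E <= bb_int r b ts (above g) t y)%E.
  by move=> /ltW; exact: IH.
have s0 : 0 < t - t0 by rewrite subr_gt0.
have u0 : 0 < r - t by rewrite subr_gt0.
have t0lr : l <= t0 <= r by rewrite lt0 ltW.
have tlr : l <= t <= r by rewrite lt ltW.
have rlr : l <= r <= r by rewrite lexx (le_trans lt0) ?ltW.
have g_t_le : g t <= ((r - t) * x + (t - t0) * b) / (t - t0 + (r - t))
    + 2 * beta * (t - t0) * (r - t) / (t - t0 + (r - t)).
  apply: barrier_le_bridge_mean => //.
    by rewrite (le_trans (g_le_dist t0lr tlr)) // gtr0_norm ?lerD2r.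
  by rewrite (le_trans (g_le_dist rlr tlr)) // distrC gtr0_norm ?lerD2r.
have bb_int_ge0 y : g t < y -> (0 <= bb_int r b ts (above g) t y)%E.
  by move=> /IHt; apply: le_trans; rewrite lee_fin mulr_ge0 ?heat_kernel_ge0.
have := integral_heat_kernel_above s0 u0 K0 beta_ge0 g_t_le bb_int_ge0 IHt.
rewrite (_ : t - t0 + (r - t) = r - t0); last by ring.
apply: le_trans; rewrite lee_fin /K exprS le_eqVlt; apply/orP; left; apply/eqP.
rewrite (_ : last t ts - t0 = (last t ts - t) + (t - t0)); last by ring.
by rewrite mulrDr opprD expRD; ring.
Qed.

Lemma bb_fdd_above_ge (a : R) (ts : seq R) :
  l < r -> g l <= a -> sorted <%R ts -> all (fun t => (l < t) && (t < r)) ts ->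
  ((gauss_window_const R ^+ size ts * expR (- (4 * beta ^+ 2 * (last l ts - l))))%:E
   <= bb_fdd l r a b ts (above g))%E.
Proof.
move=> lr g_l ts_sorted ts_in.
have ts_path : path <%R l ts.
  rewrite path_sortedE; last exact: lt_trans.
  by rewrite ts_sorted andbT; apply: sub_all ts_in => t /andP[].
have ts_r : all (fun t => t < r) ts by apply: sub_all ts_in => t /andP[].
have hk0 : 0 < heat_kernel (r - l) a b by rewrite heat_kernel_gt0 // subr_gt0.
have := bb_int_above_ge (lexx l) lr ts_path ts_r g_l.
have hk_inv0 : (0 <= ((heat_kernel (r - l) a b)^-1)%:E)%E.
  by rewrite lee_fin invr_ge0 ltW.
move=> /(lee_wpmul2r hk_inv0); apply: le_trans.
by rewrite -EFinM lee_fin mulfK ?gt_eqF.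
Qed.

End BridgeAboveBarrier.

Lemma lee_pow_prod {R : realDomainType} (k : nat) (q : R) (f : 'I_k -> \bar R) :
  0 <= q -> (forall j, (q%:E <= f j)%E) -> ((q ^+ k)%:E <= \prod_(j < k) f j)%E.
Proof.
move=> q0 q_le_f; rewrite -[k in q ^+ k]card_ord -prodr_const -prodEFin.
suff [] : (0 <= \prod_(j < k) q%:E
           /\ \prod_(j < k) q%:E <= \prod_(j < k) f j)%E by [].
elim/big_rec2: _ => // j x y _ [x0 xy].
by rewrite mule_ge0 ?lee_fin // lee_pmul ?lee_fin.
Qed.

Lemma nonincreasing_ge_last {R : realDomainType} (k : nat) (a : 'I_k -> R) (c : R) :
  (forall j j' : 'I_k, nat_of_ord j' = j.+1 -> a j' <= a j) ->
  (forall j : 'I_k, j.+1 = k -> c <= a j) ->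
  forall j, c <= a j.
Proof.
move=> a_noninc a_last j; move Hn : (k - j.+1)%N => n.
elim: n j Hn => [|n IH] j Hn; have := ltn_ord j.
  by move=> ?; apply: a_last; lia.
move=> ?; have jk : (j.+1 < k)%N by lia.
by apply: le_trans (IH (Ordinal jk) _) (a_noninc j (Ordinal jk) erefl) => /=; lia.
Qed.

Lemma free_bridges_W_event {R : realType} (k : nat) (l r : R) (am ap : 'I_k -> R)
    (d : measure_display) (Omega : measurableType d) (Pr : probability Omega R)
    (L : 'I_k -> R -> Omega -> R) (g : R -> R) (P : seq R) :
  free_bridges l r am ap Pr L -> uniq P -> all (fun p => (l < p) && (p < r)) P ->
  Pr (W_event L g P)
  = (\prod_(j < k) bb_fdd l r (am j) (ap j) (sort <=%R P) (above g))%E.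
Proof.
move=> [_ _ fdd] P_uniq P_in; rewrite -fdd ?sort_lt_sorted ?all_sort //.
congr (Pr _); apply/seteqP; split => w /= W_w j t.
  by rewrite mem_sort /above /= in_itv /= andbT; exact: W_w.
by have := W_w j t; rewrite mem_sort /above /= in_itv /= andbT.
by move=> _ t; exact: measurable_itv.
Qed.

Lemma last_sort_sub_le {R : realDomainType} (l d : R) (P : seq R) :
  0 <= d -> all (fun p => p < l + d) P -> last l (sort <=%R P) - l <= d.
Proof.
rewrite -(all_sort _ <=%R); case/lastP: (sort <=%R P) => [|s p] d0.
  by rewrite subrr.
by rewrite all_rcons last_rcons lerBlDl => /andP[/ltW].
Qed.

Section ExponentBounds.
Variable R : realType.

Lemma powR_five_halves (T : R) : 0 <= T -> T `^ (5%:R / 2%:R) = T ^+ 2 * Num.sqrt T.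
Proof.
move=> T0; rewrite (_ : 5%:R / 2%:R = 2%:R + 2^-1 :> R); last by field.
rewrite powRD; last by apply/implyP; rewrite gt_eqF // addr_gt0.
by rewrite powR_mulrn // powR12_sqrt.
Qed.

Lemma bridge_cost_ge (c b0 b1 T delta : R) (n : nat) :
  0 < c -> c <= 1 -> 0 <= b0 -> 1 <= T -> n%:R <= b0 * T -> delta <= Num.sqrt T ->
  expR (- ((b0 * - ln c + 4 * b1 ^+ 2) * T `^ (5%:R / 2%:R)))
  <= c ^+ n * expR (- (4 * (b1 * T) ^+ 2 * delta)).
Proof.
move=> c0 c1 b0_ge0 T1 nT delta_le.
have T0 : 0 <= T by rewrite (le_trans ler01).
rewrite powR_five_halves // -[c in c ^+ n]lnK ?posrE //.
rewrite -expRM_natl -expRD ler_expR.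
have : ln c <= 0 by rewrite ln_le0.
move: (ln c) => lc lc_le0.
have T_le : T <= T ^+ 2 * Num.sqrt T.
  have sqrtT1 : 1 <= Num.sqrt T by rewrite -sqrtr1 ler_sqrt.
  have T2 : T <= T ^+ 2 by rewrite expr2 ler_peMr.
  by rewrite (le_trans T2) // ler_peMr ?exprn_ge0.
have count_cost : n%:R * - lc <= b0 * - lc * (T ^+ 2 * Num.sqrt T).
  by rewrite mulrAC ler_wpM2r ?oppr_ge0 // (le_trans nT) // ler_wpM2l.
have lipschitz_cost :
    4 * (b1 * T) ^+ 2 * delta <= 4 * b1 ^+ 2 * (T ^+ 2 * Num.sqrt T).
  rewrite (_ : 4 * b1 ^+ 2 * _ = 4 * (b1 * T) ^+ 2 * Num.sqrt T); last by ring.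
  by apply: ler_wpM2l => //; rewrite mulr_ge0 ?sqr_ge0.
lra.
Qed.

Lemma inv_mul_expR_le_expR_pow (A X : R) (k : nat) : 0 <= A -> 0 <= X ->
  (k%:R * A + 1)^-1 * expR (- ((k%:R * A + 1) * X)) <= expR (- (A * X)) ^+ k.
Proof.
move=> A0 X0; have C1 : 1 <= k%:R * A + 1 by rewrite lerDr mulr_ge0.
rewrite -expRM_natl (_ : k%:R * - (A * X) = - (k%:R * A * X)); last by ring.
apply: (@le_trans _ _ (expR (- ((k%:R * A + 1) * X)))).
  by rewrite ger_pMl ?expR_gt0 // invf_le1 // (lt_le_trans ltr01).
by rewrite ler_expR lerN2 ler_wpM2r // lerDl.
Qed.

End ExponentBounds.
Theorem mainTheorem4 (R : realType) (k : nat) (b0 b1 lam0 lam1 : R) :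
  0 < b0 -> 0 < b1 -> 0 < lam0 -> 0 < lam1 ->
  exists C : R, 0 < C /\
  forall (b2 : R), 0 < b2 ->
  forall (T l r : R) (am ap : 'I_k -> R) (g : R -> R) (P : seq R),
    10 <= T -> l < r ->
    g l = 0 -> g r = 0 ->
    uniq P ->
    all (fun p => (l < p) && (p < l + Num.sqrt T) && (p < r)) P ->
    r - l <= b0 * T ->
    (size P)%:R <= b0 * T ->
    (forall x y, l <= x <= r -> l <= y <= r ->
        `|g x - g y| <= b1 * T * `|x - y|) ->
    (forall (j j' : 'I_k), nat_of_ord j' = (nat_of_ord j).+1 ->
        am j - am j' >= lam0 * Num.sqrt T /\ ap j - ap j' >= lam0 * Num.sqrt T) ->
    (forall (j : 'I_k), (nat_of_ord j).+1 = k ->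
        am j - g l >= lam1 * T /\ ap j - g r >= lam1 * T) ->
    (forall (j : 'I_k), nat_of_ord j = 0%N ->
        am j - g l <= b2 * T ^+ 2 /\ ap j - g r <= b2 * T ^+ 2) ->
    forall (d : measure_display) (Omega : measurableType d)
           (Pr : probability Omega R) (L : 'I_k -> R -> Omega -> R),
      free_bridges l r am ap Pr L ->
      ((C^-1 * expR (- (C * T `^ (5%:R / 2%:R))))%:E
         <= Pr (W_event L g P))%E.
Proof.
move=> b0_gt0 b1_gt0 lam0_gt0 lam1_gt0.
set A := b0 * - ln (gauss_window_const R) + 4 * b1 ^+ 2.
have A_ge0 : 0 <= A.
  by rewrite addr_ge0 ?mulr_ge0 ?sqr_ge0 ?oppr_ge0 ?ln_le0
    ?gauss_window_const_le1 ?ltW.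
exists (k%:R * A + 1); split; first by rewrite ltr_pwDr // mulr_ge0.
move=> b2 _ T l r am ap g P T10 lr gl gr P_uniq P_in rl P_size g_lip gaps bottom _
  d Omega Pr L bridges.
have T1 : 1 <= T by lra.
have gap_ge0 : 0 <= lam0 * Num.sqrt T by rewrite mulr_ge0 ?sqrtr_ge0 ?ltW.
have bottom_ge0 : 0 <= lam1 * T by rewrite mulr_ge0 ?ltW //; lra.
have am_ge0 : forall j, 0 <= am j.
  by apply: nonincreasing_ge_last => [j j' /gaps[/(le_trans gap_ge0) + _]
    |j /bottom[/(le_trans bottom_ge0) + _]]; rewrite ?gl subr_ge0.
have ap_ge0 : forall j, 0 <= ap j.
  by apply: nonincreasing_ge_last => [j j' /gaps[_ /(le_trans gap_ge0)]
    |j /bottom[_ /(le_trans bottom_ge0)]]; rewrite ?gr subr_ge0.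
have P_in' : all (fun p => (l < p) && (p < r)) P.
  by apply: sub_all P_in => p /andP[/andP[-> _] ->].
have last_le : last l (sort <=%R P) - l <= Num.sqrt T.
  rewrite last_sort_sub_le ?sqrtr_ge0 //.
  by apply: sub_all P_in => p /andP[/andP[_ ->]].
rewrite (free_bridges_W_event g bridges P_uniq P_in').
apply: (le_trans _ (lee_pow_prod (expR_ge0 (- (A * T `^ (5%:R / 2%:R)))) _)).
  by rewrite lee_fin inv_mul_expR_le_expR_pow ?powR_ge0.
move=> j; apply: (le_trans _ (bb_fdd_above_ge g_lip _ _ lr _ _ _));
  rewrite ?gr ?gl ?sort_lt_sorted ?all_sort ?mulr_ge0 ?(ltW b1_gt0) //; last lra.
by rewrite lee_fin bridge_cost_ge ?gauss_window_const_gt0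
  ?gauss_window_const_le1 ?size_sort ?(ltW b0_gt0).
Qed.
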